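(* Let $n\ge 2$ be an integer, $k,c_b>0$, $\rho_0>0$, and let $\lambda_{1,0}\le\cdots\le\lambda_{n,0}$ be real numbers. Consider the system $$\lambda_i'=-\lambda_i^2+\frac{k}{n}(\rho-c_b)\ (i=1,\dots,n),\qquad \rho'=-\rho\lambda,\quad \lambda=\sum_{i=1}^n\lambda_i,\qquad \rho(0)=\rho_0,\ \lambda_i(0)=\lambda_{i,0},$$ and suppose its maximal interval of existence is $[0,t_B)$ with $0<t_B<\infty$. Then there exist integers $1\le J_1\le J_2\le n$ such that $\lim_{t\to t_B^-}\lambda_i(t)=-\infty$ for $1\le i\le J_1$ and $\lim_{t\to t_B^-}\lambda_i(t)=+\infty$ for $J_2<i\le n$.
   Context: Solutions are real-valued and continuously differentiable on $[0,t_B)$. If $J_2=n$ the second condition is vacuous. *)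

From Stdlib Require Import Reals Lra Lia.
From Coquelicot Require Import Coquelicot.
Open Scope R_scope.

(* Total mass of the lambda_i, i = 1..n (indices are the paper's 1-based ones). *)
Definition lam_sum (n : nat) (lam : nat -> R -> R) (t : R) : R :=
  sum_n_m (fun i => lam i t) 1 n.

(* (lam, rho) is a solution of the system on [0,T):
   - initial conditions at t = 0;
   - differentiable on (0,T) with the ODE holding there;
   - right-continuous at 0 (so the solution is continuous on [0,T)).
   Since the right-hand side is continuous, this is the same as a C^1
   solution on [0,T) with one-sided derivative at 0. *)
Definition is_sol_on (n : nat) (k cb rho0 : R) (lam0 : nat -> R) (T : R)
    (lam : nat -> R -> R) (rho : R -> R) : Prop :=
  rho 0 = rho0 /\
  (forall i, (1 <= i <= n)%nat -> lam i 0 = lam0 i) /\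
  (forall t, 0 < t < T ->
     (forall i, (1 <= i <= n)%nat ->
        is_derive (lam i) t (- (lam i t) ^ 2 + k / INR n * (rho t - cb))) /\
     is_derive rho t (- rho t * lam_sum n lam t)) /\
  filterlim rho (at_right 0) (locally (rho 0)) /\
  (forall i, (1 <= i <= n)%nat ->
     filterlim (lam i) (at_right 0) (locally (lam i 0))).

(* rho stays positive, and lambda_1 stays the smallest lambda_i since lambda_i - lambda_1
   solves the linear equation f' = -(lambda_i + lambda_1) f.  If lambda_1 did not tend to
   -oo at tB, it would exceed some M0 at times s arbitrarily close to tB; as
   lambda_1' >= -lambda_1^2 - k cb / n, comparison with the tangent solution of this
   Riccati equation keeps lambda_1 bounded below on [s, tB).  Then every lambda_i is
   bounded below, rho grows at most exponentially, hence every lambda_i is also bounded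
   above and the whole state is bounded near tB.  Picard iteration started close enough
   to tB (its existence time depends only on that bound) continues the solution past tB,
   contradicting maximality.  So J1 = 1 and J2 = n work. *)

From Stdlib Require Import Reals Lra Lia Classical.
From Coquelicot Require Import Coquelicot.
Open Scope R_scope.

(** * Real analysis *)

Lemma continuous_of_lipschitz (f : R -> R) (K : R) :
  (forall x y, Rabs (f x - f y) <= K * Rabs (x - y)) -> forall x, continuous f x.
Proof.
  intros Hf x. apply continuity_pt_filterlim.
  intros eps Heps. exists (eps / (Rabs K + 1)).
  pose proof (Rabs_pos K) as HK.
  split; [apply Rdiv_lt_0_compat; lra |].
  intros y [_ Hy]. unfold dist in *; simpl in *; unfold R_dist in *.
  apply Rle_lt_trans with ((Rabs K + 1) * Rabs (y - x)).
  - eapply Rle_trans; [apply Hf |].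
    pose proof (Rabs_pos (y - x)). pose proof (Rle_abs K). nra.
  - apply Rlt_le_trans with ((Rabs K + 1) * (eps / (Rabs K + 1))).
    + apply Rmult_lt_compat_l; lra.
    + right; field; lra.
Qed.

Lemma abs_RInt_le_const_abs (g : R -> R) (K a b : R) :
  (forall x, continuous g x) -> (forall x, Rabs (g x) <= K) ->
  Rabs (RInt g a b) <= K * Rabs (b - a).
Proof.
  intros Hg HK.
  assert (Hex : forall u v, ex_RInt g u v)
    by (intros; apply (ex_RInt_continuous (V := R_CompleteNormedModule)); auto).
  destruct (Rle_dec a b).
  - rewrite (Rabs_right (b - a)), Rmult_comm by lra.
    apply abs_RInt_le_const; auto.
  - rewrite <- (opp_RInt_swap g b a), Rabs_Ropp, (Rabs_left (b - a)) by (auto || lra).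
    replace (- (b - a)) with (a - b) by ring. rewrite Rmult_comm.
    apply abs_RInt_le_const; auto; lra.
Qed.

Lemma continuous_of_is_derive (f : R -> R) (x l : R) : is_derive f x l -> continuous f x.
Proof. intros H. apply (ex_derive_continuous (V := R_NormedModule)). exists l; exact H. Qed.

Lemma continuity_pt_of_is_derive (f : R -> R) (x l : R) :
  is_derive f x l -> continuity_pt f x.
Proof. intros H. apply continuity_pt_filterlim. eapply continuous_of_is_derive, H. Qed.

Lemma le_diff_of_derive_le (f g df dg : R -> R) (a b : R) : a <= b ->
  (forall x, a <= x <= b -> is_derive f x (df x)) ->
  (forall x, a <= x <= b -> is_derive g x (dg x)) ->
  (forall x, a <= x <= b -> df x <= dg x) ->
  f b - f a <= g b - g a.
Proof.
  intros Hab Hf Hg Hle.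
  assert (Hd : forall x, a <= x <= b -> is_derive (fun u => g u - f u) x (dg x - df x)).
  { intros x Hx. apply (is_derive_minus (V := R_NormedModule) g f); auto. }
  destruct (MVT_gen (fun u => g u - f u) a b (fun x => dg x - df x)) as [c [Hc Heq]];
    rewrite ?Rmin_left, ?Rmax_right in * by lra.
  - intros x Hx. apply Hd; lra.
  - intros x Hx. eapply continuity_pt_of_is_derive, Hd; lra.
  - assert (0 <= (dg c - df c) * (b - a)) by (apply Rmult_le_pos; [specialize (Hle c Hc) |]; lra).
    lra.
Qed.

Lemma is_derive_glue (f g : R -> R) (t1 t l : R) : f t1 = g t1 ->
  (t <= t1 -> is_derive f t l) -> (t1 <= t -> is_derive g t l) ->
  is_derive (fun u => if Rle_dec u t1 then f u else g u) t l.
Proof.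
  intros H1 Hf Hg. destruct (Rtotal_order t t1) as [Hlt | [-> | Hgt]].
  - apply (is_derive_ext_loc f); [| apply Hf; lra].
    exists (mkposreal _ (proj2 (Rlt_0_minus _ _) Hlt)). intros u Hu.
    apply Rabs_lt_between' in Hu. simpl in Hu. destruct (Rle_dec u t1); [reflexivity | lra].
  - specialize (Hf (Rle_refl _)). specialize (Hg (Rle_refl _)).
    apply is_derive_Reals. apply is_derive_Reals in Hf, Hg.
    intros eps Heps. destruct (Hf eps Heps) as [d1 Hd1]. destruct (Hg eps Heps) as [d2 Hd2].
    exists (mkposreal _ (Rmin_pos _ _ (cond_pos d1) (cond_pos d2))). intros h Hh0 Hh. simpl in Hh.
    pose proof (Rmin_l d1 d2). pose proof (Rmin_r d1 d2).
    destruct (Rle_dec t1 t1) as [_ | []]; [| lra].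
    destruct (Rle_dec (t1 + h) t1).
    + apply Hd1; auto; lra.
    + rewrite H1. apply Hd2; auto; lra.
  - apply (is_derive_ext_loc g); [| apply Hg; lra].
    exists (mkposreal _ (proj2 (Rlt_0_minus _ _) Hgt)). intros u Hu.
    apply Rabs_lt_between' in Hu. simpl in Hu. destruct (Rle_dec u t1); [lra | reflexivity].
Qed.

Lemma is_lim_seq_abs_sub_le (u : nat -> R) (l a b : R) (N : nat) : is_lim_seq u l ->
  (forall p, (N <= p)%nat -> Rabs (u p - a) <= b) -> Rabs (l - a) <= b.
Proof.
  intros Hu Hb.
  assert (Hl : is_lim_seq (fun p => Rabs (u p - a)) (Rabs (l - a))).
  { apply (is_lim_seq_abs _ (l - a)), is_lim_seq_minus'; auto using is_lim_seq_const. }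
  apply (is_lim_seq_le_loc _ _ _ _ (ex_intro _ N Hb) Hl (is_lim_seq_const b)).
Qed.

Lemma eq_0_of_abs_le_geom (x K : R) : (forall m, Rabs x <= K * (/ 2) ^ m) -> x = 0.
Proof.
  intros H. apply Rabs_eq_0, Rle_antisym; [| apply Rabs_pos].
  assert (Hg : is_lim_seq (fun m => K * (/ 2) ^ m) (K * 0)).
  { apply (is_lim_seq_scal_l _ K 0), is_lim_seq_geom. rewrite Rabs_right; lra. }
  rewrite Rmult_0_r in Hg.
  apply (is_lim_seq_le _ _ _ _ H (is_lim_seq_const _) Hg).
Qed.

Lemma at_right_0_ball (g : R -> R) (g0 eps : R) :
  filterlim g (at_right 0) (locally g0) -> 0 < eps ->
  exists delta, 0 < delta /\ forall t, 0 < t < delta -> Rabs (g t - g0) < eps.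
Proof.
  intros H Heps. destruct (H _ (locally_ball g0 (mkposreal _ Heps))) as [delta Hd].
  exists delta. split; [apply cond_pos |]. intros t Ht. apply Hd; [| lra].
  unfold ball; simpl; unfold AbsRing_ball, abs, minus, plus, opp; simpl.
  rewrite Ropp_0, Rplus_0_r, Rabs_right; lra.
Qed.

Lemma bounded_of_at_right_0 (g : R -> R) (g0 b : R) :
  filterlim g (at_right 0) (locally g0) -> (forall t, 0 < t <= b -> continuity_pt g t) ->
  exists K, forall t, 0 < t <= b -> Rabs (g t) <= K.
Proof.
  intros Hl Hc. destruct (at_right_0_ball g g0 1 Hl Rlt_0_1) as [delta [Hdelta Hnear]].
  assert (Hnear' : forall t, 0 < t < delta -> Rabs (g t) <= Rabs g0 + 1).
  { intros t Ht. specialize (Hnear t Ht).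
    pose proof (Rabs_triang_inv (g t) g0). lra. }
  destruct (Rlt_dec b (delta / 2)).
  - exists (Rabs g0 + 1). intros t Ht. apply Hnear'; lra.
  - destruct (continuity_ab_maj g (delta / 2) b) as [tM [HM _]]; [lra | intros; apply Hc; lra |].
    destruct (continuity_ab_min g (delta / 2) b) as [tm [Hm _]]; [lra | intros; apply Hc; lra |].
    exists (Rabs g0 + 1 + Rabs (g tM) + Rabs (g tm)). intros t Ht.
    pose proof (Rabs_pos g0). pose proof (Rabs_pos (g tM)). pose proof (Rabs_pos (g tm)).
    destruct (Rlt_dec t delta).
    + specialize (Hnear' t ltac:(lra)). lra.
    + specialize (HM t ltac:(lra)). specialize (Hm t ltac:(lra)).
      pose proof (Rle_abs (g tM)). pose proof (Rabs_maj2 (g tm)). apply Rabs_le. lra.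
Qed.

Lemma sub_le_of_at_right_0 (g h : R -> R) (g0 h0 c b : R) :
  filterlim g (at_right 0) (locally g0) -> filterlim h (at_right 0) (locally h0) -> 0 < b ->
  (forall t, 0 < t <= b -> g t - h t <= c) -> g0 - h0 <= c.
Proof.
  intros Hg Hh Hb Hle. apply Rnot_lt_le. intros Hlt.
  destruct (at_right_0_ball g g0 ((g0 - h0 - c) / 2) Hg) as [e1 [He1 Hn1]]; [lra |].
  destruct (at_right_0_ball h h0 ((g0 - h0 - c) / 2) Hh) as [e2 [He2 Hn2]]; [lra |].
  set (t := Rmin (Rmin e1 e2) b / 2).
  assert (Ht : 0 < t < e1 /\ t < e2 /\ t <= b).
  { unfold t. pose proof (Rmin_l (Rmin e1 e2) b). pose proof (Rmin_r (Rmin e1 e2) b).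
    pose proof (Rmin_l e1 e2). pose proof (Rmin_r e1 e2).
    assert (0 < Rmin (Rmin e1 e2) b) by (repeat apply Rmin_pos; lra). lra. }
  specialize (Hn1 t ltac:(lra)). specialize (Hn2 t ltac:(lra)). specialize (Hle t ltac:(lra)).
  apply Rabs_lt_between' in Hn1. apply Rabs_lt_between' in Hn2. lra.
Qed.

Lemma filterlim_at_left_m_infty (f : R -> R) (tB : R) :
  (forall M, exists delta, 0 < delta /\ forall t, tB - delta < t < tB -> f t < M) ->
  filterlim f (at_left tB) (Rbar_locally m_infty).
Proof.
  intros H P [M HM]. destruct (H M) as [delta [Hdelta Hf]].
  exists (mkposreal delta Hdelta). intros t Ht Hlt. apply HM, Hf.
  apply Rabs_lt_between' in Ht. simpl in Ht. lra.
Qed.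

Lemma is_derive_RInt_inside (a : R -> R) (T s t : R) : 0 < s < T -> 0 < t < T ->
  (forall u, 0 < u < T -> continuous a u) -> is_derive (fun u => RInt a s u) t (a t).
Proof.
  intros Hs Ht Hc. apply is_derive_RInt with (a := s); [| apply Hc; auto].
  assert (He : 0 < Rmin t (T - t)) by (apply Rmin_pos; lra).
  exists (mkposreal _ He). intros b Hb. apply Rabs_lt_between' in Hb. simpl in Hb.
  pose proof (Rmin_l t (T - t)). pose proof (Rmin_r t (T - t)).
  apply RInt_correct, (ex_RInt_continuous (V := R_CompleteNormedModule)).
  intros z Hz. apply Hc. split.
  - eapply Rlt_le_trans; [| apply Hz]. apply Rmin_glb_lt; lra.
  - eapply Rle_lt_trans; [apply Hz |]. apply Rmax_lub_lt; lra.
Qed.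

Lemma eq_of_derive_0 (f : R -> R) (a b : R) : a <= b ->
  (forall x, a <= x <= b -> is_derive f x 0) -> f a = f b.
Proof.
  intros Hab H.
  pose proof (le_diff_of_derive_le f (fun _ => 0) (fun _ => 0) (fun _ => 0) a b Hab H
    (fun x _ => is_derive_const 0 x) (fun x _ => Rle_refl 0)).
  pose proof (le_diff_of_derive_le (fun _ => 0) f (fun _ => 0) (fun _ => 0) a b Hab
    (fun x _ => is_derive_const 0 x) H (fun x _ => Rle_refl 0)).
  lra.
Qed.

Lemma exp_le_of_le (x y : R) : x <= y -> exp x <= exp y.
Proof.
  intros H. destruct (Rle_lt_or_eq_dec _ _ H) as [Hlt | ->]; [apply Rlt_le, exp_increasing |]; auto.
  apply Rle_refl.
Qed.

Section LinearODE.

Variables (f a : R -> R) (T : R).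
Hypothesis f_derive : forall t, 0 < t < T -> is_derive f t (- a t * f t).
Hypothesis a_cont : forall t, 0 < t < T -> continuous a t.

Lemma linear_ode_integrating_factor (s : R) : 0 < s < T ->
  forall t, 0 < t < T -> f t * exp (RInt a s t) = f s.
Proof.
  intros Hs.
  set (h := fun u => f u * exp (RInt a s u)).
  assert (Hh : forall u, 0 < u < T -> is_derive h u 0).
  { intros u Hu. unfold h.
    replace 0 with (- a u * f u * exp (RInt a s u) + f u * (a u * exp (RInt a s u))) by ring.
    apply (is_derive_mult (K := R_AbsRing) f (fun u => exp (RInt a s u)));
      [apply f_derive; auto | | intros; apply Rmult_comm].
    apply (is_derive_comp (V := R_NormedModule) exp (fun u => RInt a s u));
      [apply is_derive_exp | apply (is_derive_RInt_inside a T); auto]. }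
  assert (Hs' : h s = f s)
    by (unfold h; rewrite RInt_point; unfold zero; simpl; rewrite exp_0; ring).
  intros t Ht. fold (h t). rewrite <- Hs'.
  destruct (Rle_dec t s).
  - apply eq_of_derive_0; auto. intros; apply Hh; lra.
  - symmetry. apply eq_of_derive_0; [lra |]. intros; apply Hh; lra.
Qed.

Lemma linear_ode_pos (s : R) : 0 < s < T -> 0 < f s -> forall t, 0 < t < T -> 0 < f t.
Proof.
  intros Hs Hfs t Ht.
  pose proof (linear_ode_integrating_factor s Hs t Ht).
  pose proof (exp_pos (RInt a s t)). nra.
Qed.

(* f t = f s * exp (RInt a t s) and RInt a t s >= - K s. *)
Lemma linear_ode_neg_near_0 (s K : R) : 0 < s < T ->
  (forall t, 0 < t <= s -> Rabs (a t) <= K) -> f s < 0 ->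
  forall t, 0 < t <= s -> f t <= f s * exp (- (K * s)).
Proof.
  intros Hs HK Hfs t Ht.
  assert (Hex : ex_RInt a t s).
  { apply (ex_RInt_continuous (V := R_CompleteNormedModule)). intros z Hz.
    rewrite Rmin_left, Rmax_right in Hz by lra. apply a_cont; lra. }
  assert (HI : Rabs (RInt a t s) <= (s - t) * K)
    by (apply abs_RInt_le_const; auto; [lra | intros; apply HK; lra]).
  assert (HK0 : 0 <= K) by (eapply Rle_trans; [apply Rabs_pos | apply (HK s); lra]).
  assert (Hft : f t = f s * exp (RInt a t s)).
  { rewrite <- (linear_ode_integrating_factor s Hs t ltac:(lra)), Rmult_assoc, <- exp_plus.
    rewrite <- (opp_RInt_swap a t s Hex). unfold opp; simpl. rewrite Rplus_opp_l, exp_0. ring. }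
  rewrite Hft. apply Rmult_le_compat_neg_l; [lra |].
  apply exp_le_of_le. apply Rabs_le_between in HI. nra.
Qed.

End LinearODE.

Lemma le_mul_exp_of_derive_le (f df : R -> R) (c a b : R) : a <= b ->
  (forall x, a <= x <= b -> is_derive f x (df x)) ->
  (forall x, a <= x <= b -> df x <= c * f x) ->
  f b <= f a * exp (c * (b - a)).
Proof.
  intros Hab Hf Hdf.
  set (h := fun x => f x * exp (- (c * x))).
  assert (Hh : h b - h a <= 0 - 0).
  { apply (le_diff_of_derive_le h (fun _ => 0)
      (fun x => (df x - c * f x) * exp (- (c * x))) (fun _ => 0)); auto.
    - intros x Hx. unfold h.
      replace ((df x - c * f x) * exp (- (c * x)))
        with (df x * exp (- (c * x)) + f x * (- c * exp (- (c * x)))) by ring.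
      apply (is_derive_mult (K := R_AbsRing) f (fun x => exp (- (c * x))));
        [apply Hf; auto | | intros; apply Rmult_comm].
      auto_derive; auto; ring.
    - intros x _. exact (is_derive_const 0 x).
    - intros x Hx. specialize (Hdf x Hx). pose proof (exp_pos (- (c * x))). nra. }
  unfold h in Hh.
  replace (f b) with (f b * exp (- (c * b)) * exp (c * b))
    by (rewrite Rmult_assoc, <- exp_plus, Rplus_opp_l, exp_0; ring).
  replace (f a * exp (c * (b - a))) with (f a * exp (- (c * a)) * exp (c * b))
    by (rewrite Rmult_assoc, <- exp_plus; do 2 f_equal; ring).
  apply Rmult_le_compat_r; [apply Rlt_le, exp_pos | lra].
Qed.

(* Comparison with the explicit solution a tan (a (t0 - t)) of x' = -(x^2 + a^2):
   atan (x / a) + a t is nondecreasing, so x cannot reach -oo in time less than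
   (atan (x s / a) + PI / 2) / a; halving that time keeps x above a tan theta. *)
Lemma riccati_lower_bound (x dx : R -> R) (a s T M0 : R) : 0 < a ->
  (forall u, s <= u < T -> is_derive x u (dx u)) ->
  (forall u, s <= u < T -> - (x u ^ 2 + a ^ 2) <= dx u) ->
  M0 <= x s -> a * (T - s) < (atan (M0 / a) + PI / 2) / 2 ->
  exists L, forall t, s <= t < T -> L <= x t.
Proof.
  intros Ha Hx Hdx HM0 HT.
  set (theta := (atan (M0 / a) - PI / 2) / 2).
  pose proof (atan_bound (M0 / a)) as Hatan.
  exists (a * tan theta). intros t Ht.
  set (g := fun u => atan (/ a * x u) + a * u).
  assert (Hg : 0 - 0 <= g t - g s).
  { apply (le_diff_of_derive_le (fun _ => 0) g (fun _ => 0)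
      (fun u => / a * dx u * / (1 + (/ a * x u) ^ 2) + a)); [lra | | |].
    - intros u _. exact (is_derive_const 0 u).
    - intros u Hu. unfold g. apply (is_derive_plus (K := R_AbsRing) (V := R_NormedModule)).
      + apply (is_derive_comp (V := R_NormedModule) atan (fun u => / a * x u)).
        * apply is_derive_Reals, derivable_pt_lim_atan.
        * apply is_derive_scal, Hx; lra.
      + replace a with (a * 1) at 2 by ring. apply is_derive_scal, (is_derive_id (K := R_AbsRing)).
    - intros u Hu. specialize (Hdx u ltac:(lra)).
      assert (Hpos : 0 < 1 + (/ a * x u) ^ 2) by (pose proof (pow2_ge_0 (/ a * x u)); lra).
      replace (/ a * dx u * / (1 + (/ a * x u) ^ 2) + a)
        with (/ a * (dx u + (x u ^ 2 + a ^ 2)) * / (1 + (/ a * x u) ^ 2))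
        by (field; split; [lra | pose proof (pow2_ge_0 (x u)); nra]).
      apply Rmult_le_pos; [apply Rmult_le_pos |]; try apply Rlt_le, Rinv_0_lt_compat; lra. }
  unfold g in Hg.
  assert (Hs : atan (M0 / a) <= atan (/ a * x s)).
  { unfold Rdiv. rewrite Rmult_comm.
    assert (Hle : / a * M0 <= / a * x s)
      by (apply Rmult_le_compat_l; [apply Rlt_le, Rinv_0_lt_compat |]; auto).
    destruct (Rle_lt_or_eq_dec _ _ Hle) as [Hlt | ->];
      [apply Rlt_le, atan_increasing; auto | apply Rle_refl]. }
  apply Rnot_lt_le. intros Hlt.
  assert (Htan : atan (/ a * x t) < theta).
  { rewrite <- (atan_tan theta) by (unfold theta; lra). apply atan_increasing.
    apply (Rmult_lt_compat_l (/ a)) in Hlt; [| apply Rinv_0_lt_compat; auto].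
    rewrite <- Rmult_assoc, Rinv_l, Rmult_1_l in Hlt; lra. }
  unfold theta in Htan. nra.
Qed.

Lemma sum_n_m_abs_sub_le (u v : nat -> R) (e : R) (m : nat) :
  (forall i, (1 <= i <= m)%nat -> Rabs (u i - v i) <= e) ->
  Rabs (sum_n_m u 1 m - sum_n_m v 1 m) <= INR m * e.
Proof.
  induction m as [| m IH]; intros H.
  - rewrite !sum_n_m_zero by lia. unfold zero; simpl. rewrite Rminus_0_r, Rabs_R0. lra.
  - rewrite !sum_n_Sm, S_INR by lia. unfold plus; simpl.
    replace (sum_n_m u 1 m + u (S m) - (sum_n_m v 1 m + v (S m)))
      with ((sum_n_m u 1 m - sum_n_m v 1 m) + (u (S m) - v (S m))) by ring.
    eapply Rle_trans; [apply Rabs_triang |].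
    specialize (IH (fun i Hi => H i ltac:(lia))). specialize (H (S m) ltac:(lia)). lra.
Qed.

Lemma sum_n_m_ge_const (u : nat -> R) (b : R) (m : nat) :
  (forall i, (1 <= i <= m)%nat -> b <= u i) -> INR m * b <= sum_n_m u 1 m.
Proof.
  induction m as [| m IH]; intros H.
  - rewrite sum_n_m_zero by lia. unfold zero; simpl. lra.
  - rewrite sum_n_Sm, S_INR by lia. unfold plus; simpl.
    specialize (IH (fun i Hi => H i ltac:(lia))). specialize (H (S m) ltac:(lia)). lra.
Qed.

Lemma uniform_bound_of_pointwise (n : nat) (P : R -> Prop) (Y : nat -> R -> R) :
  (forall j, (j <= n)%nat -> exists Mj, forall t, P t -> Rabs (Y j t) <= Mj) ->
  exists M, 0 <= M /\ forall j t, (j <= n)%nat -> P t -> Rabs (Y j t) <= M.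
Proof.
  induction n as [| n IH]; intros H.
  - destruct (H O (le_n O)) as [M0 HM0]. exists (Rmax 0 M0). split; [apply Rmax_l |].
    intros j t Hj Ht. replace j with O by lia. eapply Rle_trans; [apply HM0; auto | apply Rmax_r].
  - destruct IH as [M [HM HMb]]; [intros j Hj; apply H; lia |].
    destruct (H (S n) (le_n _)) as [M' HM'].
    exists (Rmax M M'). split; [eapply Rle_trans; [apply HM | apply Rmax_l] |].
    intros j t Hj Ht. destruct (Nat.eq_dec j (S n)) as [-> | Hne].
    + eapply Rle_trans; [apply HM'; auto | apply Rmax_r].
    + eapply Rle_trans; [apply HMb; auto; lia | apply Rmax_l].
Qed.

Lemma continuous_sum_n_m (f : nat -> R -> R) (m : nat) (x : R) :
  (forall i, (1 <= i <= m)%nat -> continuous (f i) x) ->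
  continuous (fun t => sum_n_m (fun i => f i t) 1 m) x.
Proof.
  induction m as [| m IH]; intros H.
  - apply (continuous_ext (fun _ => 0)); [| apply continuous_const].
    intros t. rewrite sum_n_m_zero by lia. reflexivity.
  - apply (continuous_ext (fun t => plus (sum_n_m (fun i => f i t) 1 m) (f (S m) t))).
    + intros t. rewrite sum_n_Sm by lia. reflexivity.
    + apply (continuous_plus (V := R_NormedModule));
        [apply IH; intros; apply H; lia | apply H; lia].
Qed.

Lemma nondecr_first_le (u : nat -> R) (n : nat) :
  (forall i, (1 <= i < n)%nat -> u i <= u (S i)) -> forall i, (1 <= i <= n)%nat -> u 1%nat <= u i.
Proof.
  intros H i. induction i as [| i IH]; intros Hi; [lia |].
  destruct (Nat.eq_dec i 0) as [-> | Hi0]; [lra |].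
  specialize (IH ltac:(lia)). specialize (H i ltac:(lia)). lra.
Qed.

(** * Picard iteration *)

Section PicardLindelof.

Variables (N : nat) (F : nat -> (nat -> R) -> R) (y1 : nat -> R) (t1 d C L : R).

Definition near_y1 (y : nat -> R) : Prop :=
  forall i, (i <= N)%nat -> Rabs (y i - y1 i) <= 1.

Hypothesis F_bounded : forall j y, (j <= N)%nat -> near_y1 y -> Rabs (F j y) <= C.
Hypothesis F_lipschitz : forall j y z e, (j <= N)%nat -> near_y1 y -> near_y1 z ->
  (forall i, (i <= N)%nat -> Rabs (y i - z i) <= e) -> Rabs (F j y - F j z) <= L * e.
(* d C <= 1 keeps the iterates within distance 1 of y1; d L <= 1/2 makes the iteration
   a contraction with ratio 1/2. *)
Hypothesis d_pos : 0 < d.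
Hypothesis d_C : d * C <= 1.
Hypothesis d_L : d * L <= / 2.

Definition clamp (t : R) : R := Rmax t1 (Rmin (t1 + d) t).

(* Clamping the upper limit makes every iterate a globally Lipschitz function of t. *)
Fixpoint picard_iter (m : nat) : nat -> R -> R :=
  match m with
  | O => fun j _ => y1 j
  | S m => fun j t => y1 j + RInt (fun s => F j (fun i => picard_iter m i s)) t1 (clamp t)
  end.

Definition picard_lim (j : nat) (t : R) : R := real (Lim_seq (fun m => picard_iter m j t)).

Lemma near_y1_y1 : near_y1 y1.
Proof. intros i _. rewrite Rminus_diag, Rabs_R0. lra. Qed.

Lemma C_nonneg : 0 <= C.
Proof. eapply Rle_trans; [apply Rabs_pos | apply (F_bounded O y1); auto using near_y1_y1; lia]. Qed.

Lemma L_nonneg : 0 <= L.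
Proof.
  assert (H := F_lipschitz O y1 y1 1 (Nat.le_0_l N) near_y1_y1 near_y1_y1).
  rewrite Rminus_diag, Rabs_R0, Rmult_1_r in H. apply H.
  intros. rewrite Rminus_diag, Rabs_R0. lra.
Qed.

Lemma F_ext j y z : (j <= N)%nat -> near_y1 z -> (forall i, (i <= N)%nat -> y i = z i) ->
  F j y = F j z.
Proof.
  intros Hj Hz Hyz.
  assert (Hy : near_y1 y) by (intros i Hi; rewrite Hyz; auto).
  assert (H := F_lipschitz j y z 0 Hj Hy Hz).
  rewrite Rmult_0_r in H. apply Rminus_diag_uniq, Rabs_eq_0, Rle_antisym; [| apply Rabs_pos].
  apply H. intros i Hi. rewrite Hyz, Rminus_diag, Rabs_R0 by auto. lra.
Qed.

Lemma clamp_lipschitz t t' : Rabs (clamp t - clamp t') <= Rabs (t - t').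
Proof. unfold clamp, Rmax, Rmin, Rabs. repeat destruct Rle_dec; repeat destruct Rcase_abs; lra. Qed.

Lemma clamp_range t : t1 <= clamp t <= t1 + d.
Proof. unfold clamp, Rmax, Rmin. repeat destruct Rle_dec; lra. Qed.

Lemma clamp_id t : t1 <= t <= t1 + d -> clamp t = t.
Proof. unfold clamp, Rmax, Rmin. repeat destruct Rle_dec; lra. Qed.

Lemma continuous_F_path (p : nat -> R -> R) (K : R) :
  (forall s, near_y1 (fun i => p i s)) ->
  (forall i s s', (i <= N)%nat -> Rabs (p i s - p i s') <= K * Rabs (s - s')) ->
  forall j x, (j <= N)%nat -> continuous (fun s => F j (fun i => p i s)) x.
Proof.
  intros Hnear Hlip j x Hj. apply (continuous_of_lipschitz _ (L * K)).
  intros s s'. rewrite Rmult_assoc. apply F_lipschitz; auto.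
Qed.

Lemma picard_iter_near_lipschitz m :
  (forall t, near_y1 (fun i => picard_iter m i t)) /\
  (forall j t t', (j <= N)%nat ->
     Rabs (picard_iter m j t - picard_iter m j t') <= C * Rabs (t - t')).
Proof.
  pose proof C_nonneg.
  induction m as [| m [Hnear Hlip]]; simpl.
  - split; [intros; apply near_y1_y1 |].
    intros. rewrite Rminus_diag, Rabs_R0. apply Rmult_le_pos; auto using Rabs_pos.
  - set (g := fun j s => F j (fun i => picard_iter m i s)).
    assert (Hc : forall j x, (j <= N)%nat -> continuous (g j) x)
      by (apply (continuous_F_path _ C); auto).
    assert (Hb : forall j x, (j <= N)%nat -> Rabs (g j x) <= C) by (intros; apply F_bounded; auto).
    assert (Hex : forall j a b, (j <= N)%nat -> ex_RInt (g j) a b)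
      by (intros; apply (ex_RInt_continuous (V := R_CompleteNormedModule)); auto).
    split.
    + intros t i Hi. rewrite Rplus_minus_l.
      pose proof (clamp_range t).
      eapply Rle_trans; [apply abs_RInt_le_const_abs; intros; [apply Hc | apply Hb]; auto |].
      rewrite Rabs_right by lra. nra.
    + intros j t t' Hj.
      change (Rabs (y1 j + RInt (g j) t1 (clamp t) - (y1 j + RInt (g j) t1 (clamp t')))
        <= C * Rabs (t - t')).
      rewrite <- (RInt_Chasles (g j) t1 (clamp t') (clamp t)) by auto. unfold plus; simpl.
      rewrite Rminus_plus_l_l, Rplus_minus_l.
      eapply Rle_trans; [apply abs_RInt_le_const_abs; intros; [apply Hc | apply Hb]; auto |].
      apply Rmult_le_compat_l; auto. apply clamp_lipschitz.
Qed.

Lemma picard_iter_near m t : near_y1 (fun i => picard_iter m i t).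
Proof. apply picard_iter_near_lipschitz. Qed.

Lemma continuous_F_picard_iter m j x : (j <= N)%nat ->
  continuous (fun s => F j (fun i => picard_iter m i s)) x.
Proof.
  apply (continuous_F_path _ C); [apply picard_iter_near | apply picard_iter_near_lipschitz].
Qed.

Lemma picard_iter_succ_sub m j t : (j <= N)%nat ->
  Rabs (picard_iter (S m) j t - picard_iter m j t) <= (/ 2) ^ m.
Proof.
  revert j t. induction m as [| m IH]; intros j t Hj.
  - rewrite pow_O. exact (picard_iter_near 1 t j Hj).
  - set (g1 := fun s => F j (fun i => picard_iter (S m) i s)).
    set (g0 := fun s => F j (fun i => picard_iter m i s)).
    change (Rabs (y1 j + RInt g1 t1 (clamp t) - (y1 j + RInt g0 t1 (clamp t))) <= (/ 2) ^ S m).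
    assert (Hsub : RInt (fun s => g1 s - g0 s) t1 (clamp t)
                   = RInt g1 t1 (clamp t) - RInt g0 t1 (clamp t))
      by (apply (RInt_minus (V := R_CompleteNormedModule));
          apply (ex_RInt_continuous (V := R_CompleteNormedModule));
          intros; apply continuous_F_picard_iter; auto).
    rewrite Rminus_plus_l_l, <- Hsub.
    eapply Rle_trans; [apply (abs_RInt_le_const_abs _ (L * (/ 2) ^ m)) |].
    + intros x. apply (continuous_minus (V := R_NormedModule));
        apply continuous_F_picard_iter; auto.
    + intros x. apply F_lipschitz; auto using picard_iter_near.
    + pose proof (clamp_range t). pose proof (pow_lt (/ 2) m ltac:(lra)).
      pose proof L_nonneg. pose proof d_L.
      assert (L * (/ 2) ^ m * (clamp t - t1) <= L * (/ 2) ^ m * d)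
        by (apply Rmult_le_compat_l; [apply Rmult_le_pos |]; lra).
      rewrite Rabs_right by lra. simpl. nra.
Qed.


Lemma picard_iter_tail m p j t : (j <= N)%nat ->
  Rabs (picard_iter (m + p) j t - picard_iter m j t) <= 2 * ((/ 2) ^ m - (/ 2) ^ (m + p)).
Proof.
  intros Hj. induction p as [| p IH].
  - rewrite Nat.add_0_r, !Rminus_diag, Rabs_R0. lra.
  - rewrite Nat.add_succ_r.
    replace (picard_iter (S (m + p)) j t - picard_iter m j t)
      with ((picard_iter (S (m + p)) j t - picard_iter (m + p) j t)
            + (picard_iter (m + p) j t - picard_iter m j t)) by ring.
    eapply Rle_trans; [apply Rabs_triang |].
    pose proof (picard_iter_succ_sub (m + p) j t Hj). simpl pow. lra.
Qed.

Lemma is_lim_seq_picard_lim j t : (j <= N)%nat ->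
  is_lim_seq (fun m => picard_iter m j t) (picard_lim j t).
Proof.
  intros Hj. apply Lim_seq_correct', ex_lim_seq_cauchy_corr. intros eps.
  destruct (pow_lt_1_zero (/ 2) ltac:(rewrite Rabs_right; lra) (eps / 2)) as [N0 HN0];
    [pose proof (cond_pos eps); lra |].
  assert (Hgeom : forall m, (N0 <= m)%nat -> 0 < (/ 2) ^ m < eps / 2).
  { intros m Hm. specialize (HN0 m Hm). rewrite Rabs_right in HN0 by (apply Rle_ge, pow_le; lra).
    split; [apply pow_lt |]; lra. }
  assert (Hle : forall a b, (N0 <= a <= b)%nat ->
                  Rabs (picard_iter b j t - picard_iter a j t) < eps).
  { intros a b Hab. replace b with (a + (b - a))%nat by lia.
    eapply Rle_lt_trans; [apply picard_iter_tail; auto |].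
    pose proof (Hgeom a ltac:(lia)). pose proof (Hgeom (a + (b - a))%nat ltac:(lia)). lra. }
  exists N0. intros a b Ha Hb. destruct (Nat.le_ge_cases a b).
  - rewrite Rabs_minus_sym. apply Hle; lia.
  - apply Hle; lia.
Qed.

Lemma picard_lim_close m j t : (j <= N)%nat ->
  Rabs (picard_lim j t - picard_iter m j t) <= 2 * (/ 2) ^ m.
Proof.
  intros Hj. apply (is_lim_seq_abs_sub_le _ _ _ _ m (is_lim_seq_picard_lim j t Hj)).
  intros p Hp. replace p with (m + (p - m))%nat by lia.
  eapply Rle_trans; [apply picard_iter_tail; auto |].
  pose proof (pow_lt (/ 2) (m + (p - m)) ltac:(lra)). lra.
Qed.

Lemma picard_lim_near t : near_y1 (fun i => picard_lim i t).
Proof.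
  intros i Hi. apply (is_lim_seq_abs_sub_le _ _ _ _ O (is_lim_seq_picard_lim i t Hi)).
  intros p _. apply picard_iter_near; auto.
Qed.

Lemma picard_lim_lipschitz j t t' : (j <= N)%nat ->
  Rabs (picard_lim j t - picard_lim j t') <= C * Rabs (t - t').
Proof.
  intros Hj. rewrite <- (Rminus_0_r (picard_lim j t - picard_lim j t')).
  apply (is_lim_seq_abs_sub_le _ _ _ _ O
    (is_lim_seq_minus' _ _ _ _ (is_lim_seq_picard_lim j t Hj) (is_lim_seq_picard_lim j t' Hj))).
  intros p _. rewrite Rminus_0_r. apply picard_iter_near_lipschitz; auto.
Qed.

Lemma continuous_F_picard_lim j x : (j <= N)%nat ->
  continuous (fun s => F j (fun i => picard_lim i s)) x.
Proof. apply (continuous_F_path _ C); [apply picard_lim_near | apply picard_lim_lipschitz]. Qed.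

Lemma picard_lim_fixed_point j t : (j <= N)%nat -> t1 <= t <= t1 + d ->
  picard_lim j t = y1 j + RInt (fun s => F j (fun i => picard_lim i s)) t1 t.
Proof.
  intros Hj Ht. apply Rminus_diag_uniq, (eq_0_of_abs_le_geom _ 2). intros m.
  set (G := fun s => F j (fun i => picard_lim i s)).
  set (g := fun s => F j (fun i => picard_iter m i s)).
  assert (Hsub : RInt (fun s => g s - G s) t1 t = RInt g t1 t - RInt G t1 t)
    by (apply (RInt_minus (V := R_CompleteNormedModule));
        apply (ex_RInt_continuous (V := R_CompleteNormedModule)); intros;
        [apply continuous_F_picard_iter | apply continuous_F_picard_lim]; auto).
  assert (Hiter : picard_iter (S m) j t = y1 j + RInt g t1 t)
    by (simpl; rewrite clamp_id; auto).
  replace (picard_lim j t - (y1 j + RInt G t1 t))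
    with ((picard_lim j t - picard_iter (S m) j t) + RInt (fun s => g s - G s) t1 t)
    by (rewrite Hsub, Hiter; ring).
  eapply Rle_trans; [apply Rabs_triang |].
  assert (Hint : Rabs (RInt (fun s => g s - G s) t1 t) <= L * (2 * (/ 2) ^ m) * Rabs (t - t1)).
  { apply abs_RInt_le_const_abs.
    - intros x. apply (continuous_minus (V := R_NormedModule));
        [apply continuous_F_picard_iter | apply continuous_F_picard_lim]; auto.
    - intros x. apply F_lipschitz; auto using picard_iter_near, picard_lim_near.
      intros i Hi. rewrite Rabs_minus_sym. apply picard_lim_close; auto. }
  pose proof (picard_lim_close (S m) j t Hj). simpl pow in *.
  pose proof (pow_lt (/ 2) m ltac:(lra)). pose proof L_nonneg. pose proof d_L.
  rewrite (Rabs_right (t - t1)) in Hint by lra.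
  assert (L * (2 * (/ 2) ^ m) * (t - t1) <= L * (2 * (/ 2) ^ m) * d)
    by (apply Rmult_le_compat_l; [apply Rmult_le_pos |]; lra).
  nra.
Qed.

Theorem picard_lindelof : exists (psi : nat -> R -> R),
  (forall j, (j <= N)%nat -> psi j t1 = y1 j) /\
  (forall j t, (j <= N)%nat -> t1 <= t <= t1 + d ->
     is_derive (psi j) t (F j (fun i => psi i t))).
Proof.
  set (psi := fun j t => y1 j + RInt (fun s => F j (fun i => picard_lim i s)) t1 t).
  exists psi. split.
  - intros j Hj. unfold psi. rewrite RInt_point. unfold zero; simpl. ring.
  - intros j t Hj Ht.
    rewrite (F_ext j (fun i => psi i t) (fun i => picard_lim i t) Hj (picard_lim_near t))
      by (intros i Hi; symmetry; unfold psi; apply picard_lim_fixed_point; auto).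
    assert (HR : is_derive (fun u => RInt (fun s => F j (fun i => picard_lim i s)) t1 u) t
                   (F j (fun i => picard_lim i t))).
    { apply (is_derive_RInt (fun s => F j (fun i => picard_lim i s)) _ t1);
        [| apply continuous_F_picard_lim; auto].
      apply filter_forall. intros b. apply (RInt_correct (V := R_CompleteNormedModule)).
      apply (ex_RInt_continuous (V := R_CompleteNormedModule)).
      intros; apply continuous_F_picard_lim; auto. }
    apply (is_derive_plus (fun _ => y1 j) _ t 0 _ (is_derive_const (y1 j) t)) in HR.
    unfold plus in HR; simpl in HR. rewrite Rplus_0_l in HR. exact HR.
Qed.

End PicardLindelof.

(** * The system *)

(* The state vector: component 0 is rho and component i >= 1 is lambda_i. *)
Definition sys_rhs (n : nat) (k cb : R) (j : nat) (y : nat -> R) : R :=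
  match j with
  | O => - y O * sum_n_m y 1 n
  | S _ => - y j ^ 2 + k / INR n * (y O - cb)
  end.

Definition sys_lip (n : nat) (k B : R) : R := 2 * INR n * B + 2 * B + Rabs (k / INR n).

Definition state (lam : nat -> R -> R) (rho : R -> R) (j : nat) (t : R) : R :=
  match j with O => rho t | S _ => lam j t end.

Lemma sys_rhs_ext n k cb j y z : (j <= n)%nat -> (forall i, (i <= n)%nat -> y i = z i) ->
  sys_rhs n k cb j y = sys_rhs n k cb j z.
Proof.
  intros Hj H. destruct j as [| j]; simpl.
  - rewrite (H O), (sum_n_m_ext_loc y z); [reflexivity | intros; apply H | ]; lia.
  - rewrite (H O), (H (S j)) by lia. reflexivity.
Qed.

Lemma sys_rhs_lipschitz n k cb B j y z e : (j <= n)%nat ->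
  (forall i, (i <= n)%nat -> Rabs (y i) <= B) -> (forall i, (i <= n)%nat -> Rabs (z i) <= B) ->
  (forall i, (i <= n)%nat -> Rabs (y i - z i) <= e) ->
  Rabs (sys_rhs n k cb j y - sys_rhs n k cb j z) <= sys_lip n k B * e.
Proof.
  intros Hj Hy Hz He. unfold sys_lip.
  pose proof (pos_INR n). pose proof (Rabs_pos (k / INR n)).
  assert (HB : 0 <= B) by (eapply Rle_trans; [apply Rabs_pos | apply (Hy O); lia]).
  assert (He0 : 0 <= e) by (eapply Rle_trans; [apply Rabs_pos | apply (He O); lia]).
  pose proof (Hy O ltac:(lia)). pose proof (Hz O ltac:(lia)). pose proof (He O ltac:(lia)).
  destruct j as [| j]; unfold sys_rhs.
  - assert (Hsyz : Rabs (sum_n_m y 1 n - sum_n_m z 1 n) <= INR n * e)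
      by (apply sum_n_m_abs_sub_le; intros; apply He; lia).
    assert (Hsy : Rabs (sum_n_m y 1 n) <= INR n * B).
    { assert (Hs0 := sum_n_m_abs_sub_le y (fun _ => 0) B n).
      rewrite sum_n_m_const, Rmult_0_r, Rminus_0_r in Hs0.
      apply Hs0. intros. rewrite Rminus_0_r. apply Hy; lia. }
    replace (- y O * sum_n_m y 1 n - - z O * sum_n_m z 1 n)
      with (- ((y O - z O) * sum_n_m y 1 n + z O * (sum_n_m y 1 n - sum_n_m z 1 n))) by ring.
    rewrite Rabs_Ropp. eapply Rle_trans; [apply Rabs_triang |]. rewrite !Rabs_mult.
    assert (Rabs (y O - z O) * Rabs (sum_n_m y 1 n) <= e * (INR n * B))
      by (apply Rmult_le_compat; auto using Rabs_pos).
    assert (Rabs (z O) * Rabs (sum_n_m y 1 n - sum_n_m z 1 n) <= B * (INR n * e))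
      by (apply Rmult_le_compat; auto using Rabs_pos).
    nra.
  - pose proof (Hy (S j) Hj). pose proof (Hz (S j) Hj). pose proof (He (S j) Hj).
    replace (- y (S j) ^ 2 + k / INR n * (y O - cb) - (- z (S j) ^ 2 + k / INR n * (z O - cb)))
      with (- ((y (S j) - z (S j)) * (y (S j) + z (S j))) + k / INR n * (y O - z O)) by ring.
    eapply Rle_trans; [apply Rabs_triang |]. rewrite Rabs_Ropp, !Rabs_mult.
    assert (Rabs (y (S j) + z (S j)) <= 2 * B) by (eapply Rle_trans; [apply Rabs_triang | lra]).
    assert (Rabs (y (S j) - z (S j)) * Rabs (y (S j) + z (S j)) <= e * (2 * B))
      by (apply Rmult_le_compat; auto using Rabs_pos).
    assert (Rabs (k / INR n) * Rabs (y O - z O) <= Rabs (k / INR n) * e)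
      by (apply Rmult_le_compat_l; auto).
    assert (0 <= INR n * B * e) by (apply Rmult_le_pos; [apply Rmult_le_pos |]; auto).
    lra.
Qed.

Lemma sys_rhs_bound n k cb B j y : (j <= n)%nat -> (forall i, (i <= n)%nat -> Rabs (y i) <= B) ->
  Rabs (sys_rhs n k cb j y) <= sys_lip n k B * B + Rabs (k / INR n * cb).
Proof.
  intros Hj Hy.
  assert (HB : 0 <= B) by (eapply Rle_trans; [apply Rabs_pos | apply (Hy O); lia]).
  assert (H0 : Rabs (sys_rhs n k cb j (fun _ => 0)) <= Rabs (k / INR n * cb)).
  { destruct j; unfold sys_rhs.
    - rewrite Ropp_0, Rmult_0_l, Rabs_R0. apply Rabs_pos.
    - right. rewrite <- Rabs_Ropp. f_equal. ring. }
  replace (sys_rhs n k cb j y)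
    with ((sys_rhs n k cb j y - sys_rhs n k cb j (fun _ => 0)) + sys_rhs n k cb j (fun _ => 0))
    by ring.
  eapply Rle_trans; [apply Rabs_triang | apply Rplus_le_compat; auto].
  apply sys_rhs_lipschitz; auto; intros; rewrite ?Rminus_0_r, ?Rabs_R0; auto.
Qed.

Lemma sys_local_solution n k cb M : 0 <= M -> exists d, 0 < d /\
  forall t1 y1, (forall j, (j <= n)%nat -> Rabs (y1 j) <= M) ->
  exists psi : nat -> R -> R, (forall j, (j <= n)%nat -> psi j t1 = y1 j) /\
    (forall j t, (j <= n)%nat -> t1 <= t <= t1 + d ->
       is_derive (psi j) t (sys_rhs n k cb j (fun i => psi i t))).
Proof.
  intros HM.
  set (B := M + 1). set (L := sys_lip n k B).
  set (C := L * B + Rabs (k / INR n * cb)).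
  assert (HL : 0 <= L).
  { unfold L, sys_lip, B. pose proof (pos_INR n). pose proof (Rabs_pos (k / INR n)). nra. }
  assert (HC : 0 <= C) by (unfold C, B; pose proof (Rabs_pos (k / INR n * cb)); nra).
  exists (/ (2 * (C + L + 1))). split; [apply Rinv_0_lt_compat; lra |].
  intros t1 y1 Hy1.
  assert (Hnear : forall y, near_y1 n y1 y -> forall i, (i <= n)%nat -> Rabs (y i) <= B).
  { intros y Hy i Hi. specialize (Hy i Hi). specialize (Hy1 i Hi).
    pose proof (Rabs_triang_inv (y i) (y1 i)). unfold B. lra. }
  apply (picard_lindelof n (sys_rhs n k cb) y1 t1 _ C L).
  - intros j y Hj Hy. apply sys_rhs_bound; auto.
  - intros j y z e Hj Hy Hz He. apply sys_rhs_lipschitz; auto.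
  - apply Rinv_0_lt_compat; lra.
  - apply (Rmult_le_reg_l (2 * (C + L + 1))); [lra |].
    rewrite <- Rmult_assoc, Rinv_r, Rmult_1_l; lra.
  - apply (Rmult_le_reg_l (2 * (C + L + 1))); [lra |].
    rewrite <- Rmult_assoc, Rinv_r, Rmult_1_l by lra. field_simplify; lra.
Qed.

Lemma state_is_derive n k cb rho0 lam0 T lam rho : is_sol_on n k cb rho0 lam0 T lam rho ->
  forall j t, (j <= n)%nat -> 0 < t < T ->
  is_derive (state lam rho j) t (sys_rhs n k cb j (fun i => state lam rho i t)).
Proof.
  intros [_ [_ [Hd _]]] j t Hj Ht. destruct (Hd t Ht) as [Hlam Hrho].
  destruct j as [| j]; simpl; [| apply Hlam; lia].
  rewrite (sum_n_m_ext_loc _ (fun i => lam i t)); [exact Hrho |].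
  intros [| i] Hi; [lia | reflexivity].
Qed.

Lemma is_sol_on_of_state n k cb rho0 lam0 T (Y : nat -> R -> R) :
  Y O 0 = rho0 -> (forall i, (1 <= i <= n)%nat -> Y i 0 = lam0 i) ->
  (forall j t, (j <= n)%nat -> 0 < t < T ->
     is_derive (Y j) t (sys_rhs n k cb j (fun i => Y i t))) ->
  (forall j, (j <= n)%nat -> filterlim (Y j) (at_right 0) (locally (Y j 0))) ->
  is_sol_on n k cb rho0 lam0 T Y (Y O).
Proof.
  intros H0 Hi0 Hd Hlim. split; [| split; [| split; [| split]]]; auto.
  - intros t Ht. split; [intros [| i] Hi; [lia |] |]; apply Hd; auto; lia.
  - apply Hlim. lia.
  - intros i Hi. apply Hlim. lia.
Qed.

Lemma is_sol_on_extend n k cb rho0 lam0 tB lam rho s M :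
  is_sol_on n k cb rho0 lam0 tB lam rho -> 0 < s < tB -> 0 <= M ->
  (forall j t, (j <= n)%nat -> s <= t < tB -> Rabs (state lam rho j t) <= M) ->
  exists T lam' rho', tB < T /\ is_sol_on n k cb rho0 lam0 T lam' rho'.
Proof.
  intros Hsol Hs HM Hbound.
  destruct (sys_local_solution n k cb M HM) as [d [Hd Hloc]].
  set (t1 := Rmax s (tB - d / 2)).
  assert (Ht1 : s <= t1 < tB /\ tB < t1 + d).
  { unfold t1. pose proof (Rmax_l s (tB - d / 2)). pose proof (Rmax_r s (tB - d / 2)).
    assert (Rmax s (tB - d / 2) < tB) by (apply Rmax_lub_lt; lra). lra. }
  destruct (Hloc t1 (fun j => state lam rho j t1)) as [psi [Hpsi0 Hpsi]];
    [intros; apply Hbound; auto; lra |].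
  set (Y := fun j t => if Rle_dec t t1 then state lam rho j t else psi j t).
  assert (HY0 : forall j, Y j 0 = state lam rho j 0)
    by (intros; unfold Y; destruct (Rle_dec 0 t1); [reflexivity | lra]).
  pose proof Hsol as [Hrho0 [Hlam0 [_ [Hrho_r Hlam_r]]]].
  exists (t1 + d), Y, (Y O). split; [lra |].
  apply is_sol_on_of_state.
  - rewrite HY0. exact Hrho0.
  - intros [| i] Hi; [lia |]. rewrite HY0. apply Hlam0; auto.
  - intros j t Hj Ht. apply (is_derive_glue (state lam rho j) (psi j)).
    + rewrite Hpsi0; auto.
    + intros Hle. unfold Y. destruct (Rle_dec t t1); [| lra].
      apply (state_is_derive n k cb rho0 lam0 tB); auto; lra.
    + intros Hge. rewrite (sys_rhs_ext n k cb j _ (fun i => psi i t));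
        [apply Hpsi; auto; lra | auto |].
      intros i Hi. unfold Y. destruct (Rle_dec t t1); [| reflexivity].
      replace t with t1 by lra. rewrite Hpsi0; auto.
  - intros j Hj. rewrite HY0. apply (filterlim_ext_loc (state lam rho j)).
    + exists (mkposreal t1 ltac:(lra)). intros u Hu Hu0.
      apply Rabs_lt_between' in Hu. simpl in Hu.
      unfold Y. destruct (Rle_dec u t1); [reflexivity | lra].
    + destruct j as [| j]; [exact Hrho_r | apply Hlam_r; lia].
Qed.

(** * Behaviour of a solution *)

Section Solution.

Variables (n : nat) (k cb rho0 : R) (lam0 : nat -> R) (T : R)
  (lam : nat -> R -> R) (rho : R -> R).
Hypothesis sol : is_sol_on n k cb rho0 lam0 T lam rho.

Lemma lam_continuous i t : (1 <= i <= n)%nat -> 0 < t < T -> continuous (lam i) t.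
Proof.
  intros Hi Ht. pose proof sol as [_ [_ [Hd _]]].
  eapply continuous_of_is_derive, (proj1 (Hd t Ht)); auto.
Qed.

Lemma rho_pos : 0 < rho0 -> forall t, 0 < t < T -> 0 < rho t.
Proof.
  intros Hr0 t Ht. pose proof sol as [Hrho0 [_ [Hd [Hrho_r _]]]].
  rewrite Hrho0 in Hrho_r.
  destruct (at_right_0_ball rho rho0 (rho0 / 2) Hrho_r) as [delta [Hdelta Hnear]]; [lra |].
  set (s := Rmin (delta / 2) t).
  assert (Hs : 0 < s <= t) by (split; [apply Rmin_pos | apply Rmin_r]; lra).
  assert (Hs_delta : s < delta) by (eapply Rle_lt_trans; [apply Rmin_l | lra]).
  apply (linear_ode_pos rho (lam_sum n lam) T) with s; auto; try lra.
  - intros u Hu. replace (- lam_sum n lam u * rho u) with (- rho u * lam_sum n lam u) by ring.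
    apply (Hd u Hu).
  - intros u Hu. apply continuous_sum_n_m. intros. apply lam_continuous; auto.
  - specialize (Hnear s ltac:(lra)). apply Rabs_lt_between' in Hnear. lra.
Qed.

Lemma lam_first_le : (forall i, (1 <= i < n)%nat -> lam0 i <= lam0 (S i)) ->
  forall i t, (1 <= i <= n)%nat -> 0 < t < T -> lam 1%nat t <= lam i t.
Proof.
  intros Hmono i ts Hi Hts. pose proof sol as [_ [Hlam0 [Hd [_ Hlam_r]]]].
  assert (H1 : (1 <= 1 <= n)%nat) by lia.
  pose proof (nondecr_first_le lam0 n Hmono i Hi) as Hinit.
  apply Rnot_lt_le. intros Hlt.
  set (f := fun t => lam i t - lam 1%nat t).
  set (a := fun t => lam i t + lam 1%nat t).
  assert (Hf : forall t, 0 < t < T -> is_derive f t (- a t * f t)).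
  { intros t Ht. destruct (Hd t Ht) as [Hlam _].
    replace (- a t * f t) with ((- lam i t ^ 2 + k / INR n * (rho t - cb))
                                - (- lam 1%nat t ^ 2 + k / INR n * (rho t - cb)))
      by (unfold a, f; ring).
    apply (is_derive_minus (V := R_NormedModule) (lam i) (lam 1%nat)); apply Hlam; auto. }
  assert (Ha : forall t, 0 < t < T -> continuous a t).
  { intros t Ht. apply (continuous_plus (V := R_NormedModule) (lam i) (lam 1%nat));
      apply lam_continuous; auto. }
  assert (Hcont : forall j, (1 <= j <= n)%nat -> forall t, 0 < t <= ts -> continuity_pt (lam j) t)
    by (intros j Hj t Ht; apply continuity_pt_filterlim, lam_continuous; auto; lra).
  assert (Hri := Hlam_r i Hi). rewrite (Hlam0 i Hi) in Hri.
  assert (Hr1 := Hlam_r 1%nat H1). rewrite (Hlam0 1%nat H1) in Hr1.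
  destruct (bounded_of_at_right_0 _ _ ts Hri (Hcont i Hi)) as [K1 HK1].
  destruct (bounded_of_at_right_0 _ _ ts Hr1 (Hcont 1%nat H1)) as [K2 HK2].
  (* f ts < 0 would keep f below c < 0 down to time 0, whereas f (0) >= 0. *)
  set (c := f ts * exp (- ((K1 + K2) * ts))).
  assert (Hc : c < 0) by (unfold c, f; pose proof (exp_pos (- ((K1 + K2) * ts))); nra).
  assert (Hneg : forall t, 0 < t <= ts -> f t <= c).
  { apply (linear_ode_neg_near_0 f a T Hf Ha); auto; [| unfold f; lra].
    intros t Ht. unfold a. eapply Rle_trans; [apply Rabs_triang |].
    pose proof (HK1 t Ht). pose proof (HK2 t Ht). lra. }
  pose proof (sub_le_of_at_right_0 _ _ _ _ c ts Hri Hr1 (proj1 Hts) Hneg). lra.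
Qed.

(* Since every lambda_i >= L1, rho' = - rho * lam_sum <= n |L1| rho. *)
Lemma rho_le_of_lam_lower_bound (s L1 : R) : 0 < rho0 -> 0 < s < T ->
  (forall i t, (1 <= i <= n)%nat -> s <= t < T -> L1 <= lam i t) ->
  forall t, s <= t < T -> rho t <= rho s * exp (INR n * Rabs L1 * T).
Proof.
  intros Hr0 Hs Hlow t Ht. pose proof sol as [_ [_ [Hd _]]].
  assert (Hpos : forall t, 0 < t < T -> 0 < rho t) by (apply rho_pos; auto).
  set (c := INR n * Rabs L1).
  assert (Hc : 0 <= c) by (apply Rmult_le_pos; [apply pos_INR | apply Rabs_pos]).
  eapply Rle_trans.
  - apply (le_mul_exp_of_derive_le rho (fun u => - rho u * lam_sum n lam u) c s t); [lra | |].
    + intros u Hu. apply (Hd u ltac:(lra)).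
    + intros u Hu.
      assert (INR n * L1 <= lam_sum n lam u)
        by (apply sum_n_m_ge_const; intros; apply Hlow; auto; lra).
      assert (- c <= INR n * L1)
        by (unfold c; pose proof (Rabs_maj2 L1); pose proof (pos_INR n); nra).
      pose proof (Hpos u ltac:(lra)). nra.
  - apply Rmult_le_compat_l; [apply Rlt_le, Hpos; lra |]. apply exp_le_of_le. nra.
Qed.

Lemma state_bounded_of_lam_first_lower_bound (s L1 : R) :
  (1 <= n)%nat -> 0 < k -> 0 < cb -> 0 < rho0 ->
  (forall i, (1 <= i < n)%nat -> lam0 i <= lam0 (S i)) -> 0 < s < T ->
  (forall t, s <= t < T -> L1 <= lam 1%nat t) ->
  exists M, 0 <= M /\ forall j t, (j <= n)%nat -> s <= t < T -> Rabs (state lam rho j t) <= M.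
Proof.
  intros Hn Hk Hcb Hr0 Hmono Hs HL1.
  pose proof sol as [_ [_ [Hd _]]].
  assert (Hkn : 0 < k / INR n) by (apply Rdiv_lt_0_compat; [| apply lt_0_INR; lia]; auto).
  assert (Hlow : forall i t, (1 <= i <= n)%nat -> s <= t < T -> L1 <= lam i t)
    by (intros i t Hi Ht; apply (Rle_trans _ (lam 1%nat t));
        [apply HL1 | apply lam_first_le]; auto; lra).
  assert (Hpos : forall t, 0 < t < T -> 0 < rho t) by (apply rho_pos; auto).
  set (P := rho s * exp (INR n * Rabs L1 * T)).
  assert (HP : forall t, s <= t < T -> rho t <= P) by (apply rho_le_of_lam_lower_bound; auto).
  assert (HP0 : 0 <= P) by (apply Rmult_le_pos; [apply Rlt_le, Hpos; lra | apply Rlt_le, exp_pos]).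
  apply uniform_bound_of_pointwise. intros [| j] Hj.
  - exists P. intros t Ht. simpl.
    rewrite Rabs_right; [apply HP; auto | apply Rle_ge, Rlt_le, Hpos; lra].
  - exists (Rabs L1 + Rabs (lam (S j) s) + k / INR n * P * T). intros t Ht. simpl.
    assert (Hup : lam (S j) t - lam (S j) s <= k / INR n * P * t - k / INR n * P * s).
    { apply (le_diff_of_derive_le (lam (S j)) (fun u => k / INR n * P * u)
        (fun u => - lam (S j) u ^ 2 + k / INR n * (rho u - cb)) (fun _ => k / INR n * P));
        [lra | | |].
      - intros u Hu. apply (proj1 (Hd u ltac:(lra))). lia.
      - intros u _. auto_derive; auto; ring.
      - intros u Hu. pose proof (HP u ltac:(lra)). pose proof (pow2_ge_0 (lam (S j) u)).
        assert (k / INR n * (rho u - cb) <= k / INR n * P) by (apply Rmult_le_compat_l; lra).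
        lra. }
    pose proof (Hlow (S j) t ltac:(lia) Ht).
    assert (k / INR n * P * t - k / INR n * P * s <= k / INR n * P * T).
    { rewrite <- Rmult_minus_distr_l. apply Rmult_le_compat_l; [apply Rmult_le_pos |]; lra. }
    assert (0 <= k / INR n * P * T) by (apply Rmult_le_pos; [apply Rmult_le_pos |]; lra).
    pose proof (Rabs_maj2 L1). pose proof (Rabs_pos L1).
    pose proof (Rle_abs (lam (S j) s)). pose proof (Rabs_pos (lam (S j) s)).
    apply Rabs_le. lra.
Qed.

Lemma lam_first_to_m_infty : (1 <= n)%nat -> 0 < k -> 0 < cb -> 0 < rho0 ->
  (forall i, (1 <= i < n)%nat -> lam0 i <= lam0 (S i)) -> 0 < T ->
  (forall T' lam' rho', T < T' -> ~ is_sol_on n k cb rho0 lam0 T' lam' rho') ->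
  filterlim (lam 1%nat) (at_left T) (Rbar_locally m_infty).
Proof.
  intros Hn Hk Hcb Hr0 Hmono HT Hmax. pose proof sol as [_ [_ [Hd _]]].
  assert (Hkn : 0 < k / INR n) by (apply Rdiv_lt_0_compat; [| apply lt_0_INR; lia]; auto).
  set (a := sqrt (k / INR n * cb)).
  assert (Ha : 0 < a) by (apply sqrt_lt_R0, Rmult_lt_0_compat; auto).
  assert (Ha2 : a ^ 2 = k / INR n * cb) by (unfold a; rewrite pow2_sqrt; auto; nra).
  apply filterlim_at_left_m_infty. intros M0. apply NNPP. intros Hno.
  set (delta := Rmin ((atan (M0 / a) + PI / 2) / (2 * a)) (T / 2)).
  assert (Hdelta : 0 < delta).
  { pose proof (atan_bound (M0 / a)). apply Rmin_pos; [apply Rdiv_lt_0_compat |]; lra. }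
  destruct (classic (exists s, T - delta < s < T /\ M0 <= lam 1%nat s)) as [[s [Hs HM0]] | Hall].
  2: { apply Hno. exists delta. split; auto. intros t Ht.
       apply Rnot_le_lt. intros Hle. apply Hall. exists t. auto. }
  assert (Hdelta_T : delta <= T / 2) by apply Rmin_r.
  assert (Hdelta_atan : delta <= (atan (M0 / a) + PI / 2) / (2 * a)) by apply Rmin_l.
  assert (Hs0 : 0 < s < T) by lra.
  destruct (riccati_lower_bound (lam 1%nat) (fun u => - lam 1%nat u ^ 2 + k / INR n * (rho u - cb))
              a s T M0) as [L1 HL1]; auto.
  - intros u Hu. apply (proj1 (Hd u ltac:(lra))). lia.
  - intros u Hu. pose proof (rho_pos Hr0 u ltac:(lra)).
    assert (0 <= k / INR n * rho u) by nra. nra.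
  - assert (Hlt : T - s < (atan (M0 / a) + PI / 2) / (2 * a)) by lra.
    apply (Rmult_lt_compat_l a) in Hlt; auto.
    replace (a * ((atan (M0 / a) + PI / 2) / (2 * a))) with ((atan (M0 / a) + PI / 2) / 2) in Hlt
      by (field; lra).
    exact Hlt.
  - destruct (state_bounded_of_lam_first_lower_bound s L1) as [M [HM Hbound]]; auto.
    destruct (is_sol_on_extend n k cb rho0 lam0 T lam rho s M)
      as [T' [lam' [rho' [HT' Hsol']]]]; auto.
    exact (Hmax T' lam' rho' HT' Hsol').
Qed.

End Solution.

Theorem proposition2p3 (n : nat) (k cb rho0 : R) (lam0 : nat -> R)
  (lam : nat -> R -> R) (rho : R -> R) (tB : R) :
  (2 <= n)%nat -> 0 < k -> 0 < cb -> 0 < rho0 ->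
  (forall i, (1 <= i < n)%nat -> lam0 i <= lam0 (S i)) ->
  0 < tB ->
  is_sol_on n k cb rho0 lam0 tB lam rho ->
  (* maximality of [0,tB): no solution exists on any longer interval [0,T) *)
  (forall T (lam' : nat -> R -> R) (rho' : R -> R),
      tB < T -> ~ is_sol_on n k cb rho0 lam0 T lam' rho') ->
  exists J1 J2 : nat,
    (1 <= J1)%nat /\ (J1 <= J2)%nat /\ (J2 <= n)%nat /\
    (forall i, (1 <= i <= J1)%nat ->
       filterlim (lam i) (at_left tB) (Rbar_locally m_infty)) /\
    (forall i, (J2 < i <= n)%nat ->
       filterlim (lam i) (at_left tB) (Rbar_locally p_infty)).
Proof.
  intros Hn Hk Hcb Hr0 Hmono HtB Hsol Hmax.
  exists 1%nat, n. split; [lia | split; [lia | split; [lia | split]]].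
  - intros i Hi. replace i with 1%nat by lia.
    apply (lam_first_to_m_infty n k cb rho0 lam0 tB lam rho); auto. lia.
  - intros i Hi. lia.
Qed.
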